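(* Let $(X,d_X)$ be a complete metric space. Suppose that $U$ is a process on $X$ with pullback attractor $\mathfrak{A}=\{A(t)\}_{t\in\mathbb{R}}$ and that $S$ is a semigroup on $X$ with global attractor $\mathcal{A}$. Assume that (i) $\mathfrak{A}$ is forward bounded, i.e. there is a bounded set $B\subset X$ such that $\bigcup_{t\geq 0}A(t)\subset B$; (ii) for every $T>0$, $$\lim_{t\to\infty}\sup_{x\in B} d_X\big(U(t+T,t,x),S(T,x)\big)=0.$$ Then $\lim_{t\to\infty}\operatorname{dist}\big(A(t),\mathcal{A}\big)=0$.
   Context: A process on $X$ is a map $U:\{(t,\tau)\in\mathbb{R}^2:t\geq\tau\}\times X\to X$ with $U(\tau,\tau,x)=x$ and $U(t,s,U(s,\tau,x))=U(t,\tau,x)$ for all $t\geq s\geq\tau$, $x\in X$ (no continuity is assumed). A pullback attractor of $U$ is a family $\mathfrak{A}=\{A(t)\}_{t\in\mathbb{R}}$ of nonempty compact subsets of $X$ which is invariant ($U(t,\tau,A(\tau))=A(t)$ for all $t\geq\tau$), pullback attracts every nonempty bounded set $D\subset X$ (i.e. $\lim_{s\to\infty}\operatorname{dist}(U(t,t-s,D),A(t))=0$ for every $t\in\mathbb{R}$), and is minimal among families with these properties. A semigroup on $X$ is a map $S:[0,\infty)\times X\to X$ with $S(0,x)=x$ and $S(t+s,x)=S(t,S(s,x))$; its global attractor $\mathcal{A}$ is a nonempty compact set with $S(t,\mathcal{A})=\mathcal{A}$ for all $t\geq0$ that attracts every bounded set $D$: $\lim_{t\to\infty}\operatorname{dist}(S(t,D),\mathcal{A})=0$.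 Here $\operatorname{dist}(A,B)=\sup_{a\in A}\inf_{b\in B}d_X(a,b)$ is the Hausdorff semi-metric. *)

From HB Require Import structures.
From mathcomp Require Import all_boot all_order all_algebra.
From mathcomp Require Import all_classical all_reals all_analysis.
Set Implicit Arguments. Unset Strict Implicit. Unset Printing Implicit Defensive.
Import Order.TTheory GRing.Theory Num.Theory.
Local Open Scope classical_set_scope.
Local Open Scope ring_scope.

Section Defs.
Context {R : realType} {X : metricType R}.

Definition complete_space : Prop :=
  forall F : set_system X, ProperFilter F -> cauchy F -> exists x : X, F --> x.

Definition mbounded (D : set X) : Prop :=
  exists (x0 : X) (r : R), forall y, D y -> mdist x0 y <= r.

Definition hdist (A B : set X) : \bar R :=
  ereal_sup [set ereal_inf [set (mdist a b)%:E | b in B] | a in A].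

(* a process: U t tau x, meaningful for t >= tau *)
Definition is_process (U : R -> R -> X -> X) : Prop :=
  (forall tau x, U tau tau x = x) /\
  (forall t s tau x, tau <= s -> s <= t -> U t s (U s tau x) = U t tau x).

Definition is_semigroup (S : R -> X -> X) : Prop :=
  (forall x, S 0 x = x) /\
  (forall t s x, 0 <= t -> 0 <= s -> S (t + s) x = S t (S s x)).

Definition pullback_invariant (U : R -> R -> X -> X) (A : R -> set X) : Prop :=
  forall t tau, tau <= t -> U t tau @` A tau = A t.

Definition pullback_attracting (U : R -> R -> X -> X) (A : R -> set X) : Prop :=
  forall D : set X, D !=set0 -> mbounded D ->
    forall t : R, hdist (U t (t - s) @` D) (A t) @[s --> +oo] --> 0%E.

Definition pullback_attracting_family (U : R -> R -> X -> X) (A : R -> set X)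
  : Prop :=
  (forall t, A t !=set0) /\ (forall t, compact (A t)) /\
  pullback_invariant U A /\ pullback_attracting U A.

Definition pullback_attractor (U : R -> R -> X -> X) (A : R -> set X) : Prop :=
  pullback_attracting_family U A /\
  (forall C : R -> set X, pullback_attracting_family U C ->
     forall t, A t `<=` C t).

Definition global_attractor (S : R -> X -> X) (Ag : set X) : Prop :=
  Ag !=set0 /\ compact Ag /\
  (forall t, 0 <= t -> S t @` Ag = Ag) /\
  (forall D : set X, D !=set0 -> mbounded D ->
     hdist (S t @` D) Ag @[t --> +oo] --> 0%E).

End Defs.

From HB Require Import structures.
From mathcomp Require Import all_boot all_order all_algebra.
From mathcomp Require Import all_classical all_reals all_analysis.
Import Order.TTheory GRing.Theory Num.Theory.
Local Open Scope classical_set_scope.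
Local Open Scope ring_scope.

(* By invariance, A(t + T) = U(t + T, t, A t) lies in U(t + T, t, B) for
   t >= 0, and the distance to a set is 1-Lipschitz:
     dist(U(t + T, t, x), Ag) <= d(U(t + T, t, x), S(T, x)) + dist(S(T, x), Ag).
   Fix T so large that S(T, B) lies within e/2 of Ag, then t so large that
   U(t + T, t, .) is uniformly e/2-close to S(T, .) on B. *)

Section ereal_limits.
Context {R : realType} {T : Type} {F : set_system T} {FF : Filter F}.
Local Open Scope ereal_scope.

Lemma cvge0_near_le (f : T -> \bar R) (e : R) : (0 < e)%R ->
  f @ F --> 0 -> \forall t \near F, f t <= e%:E.
Proof.
move=> e_gt0 /(_ [set y | y <= e%:E]); apply; apply/nbhs_EFin; exists e => //= x.
rewrite /ball /= sub0r normrN lee_fin => /ltW; exact: le_trans (ler_norm x).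
Qed.

Lemma near_le_cvge0 (f : T -> \bar R) :
  (\forall t \near F, 0 <= f t) ->
  (forall e : R, (0 < e)%R -> \forall t \near F, f t <= e%:E) -> f @ F --> 0.
Proof.
move=> f_ge0 f_small; apply/fine_cvgP; split.
  near=> t; rewrite ge0_fin_numE; last by near: t.
  by rewrite (@le_lt_trans _ _ 1%:E) ?ltry//; near: t; exact: f_small.
apply/cvgrPdist_le => e e_gt0; near=> t.
have ft_ge0 : 0 <= f t by near: t.
have ft_fin : f t \is a fin_num.
  by rewrite ge0_fin_numE // (@le_lt_trans _ _ e%:E) ?ltry//; near: t; exact: f_small.
rewrite sub0r normrN ger0_norm ?fine_ge0 // -lee_fin fineK //.
by near: t; exact: f_small.
Unshelve. all: end_near.
Qed.

End ereal_limits.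

Lemma near_pinfty_addr {R : realType} (T : R) (P : R -> Prop) :
  (\forall t \near +oo, P (t + T)) -> \forall s \near +oo, P s.
Proof.
move=> [M [_ PM]]; exists (M + T); split; first exact: num_real.
by move=> s; rewrite -ltrBrDr => /PM; rewrite subrK.
Qed.

Section hausdorff_semidistance.
Context {R : realType} {X : metricType R}.
Implicit Types (x y : X) (A C D : set X).
Local Open Scope ereal_scope.

Definition pdist x C : \bar R := ereal_inf [set (mdist x c)%:E | c in C].

Lemma pdist_ge0 x C : 0 <= pdist x C.
Proof. by apply: le_ereal_inf_tmp => _ [c _ <-]; rewrite lee_fin mdist_ge0. Qed.

Lemma pdist_le_mdistD x y C : pdist x C <= (mdist x y)%:E + pdist y C.
Proof.
rewrite -leeBlDl //; apply: le_ereal_inf_tmp => _ [c Cc <-].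
rewrite leeBlDl // -EFinD (@le_trans _ _ (mdist x c)%:E) ?lee_fin ?metric_triangle //.
by apply: ereal_inf_lbound; exists c.
Qed.

Lemma hdist_ge0 A C : A !=set0 -> 0 <= hdist A C.
Proof.
move=> [a Aa]; rewrite (le_trans (pdist_ge0 a C)) //.
by apply: ereal_sup_ubound; exists a.
Qed.

Lemma pdist_le_hdist A C a : A a -> pdist a C <= hdist A C.
Proof. by move=> Aa; apply: ereal_sup_ubound; exists a. Qed.

Lemma le_hdist A A' C : A `<=` A' -> hdist A C <= hdist A' C.
Proof. by move=> AA'; apply: ereal_sup_le => _ [a /AA' A'a <-]; exists a. Qed.

Lemma hdist_image_le (f g : X -> X) D C :
  hdist (f @` D) C <=
  ereal_sup [set (mdist (f x) (g x))%:E | x in D] + hdist (g @` D) C.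
Proof.
apply: ge_ereal_sup => _ [_ [x Dx <-] <-].
apply: le_trans (pdist_le_mdistD (f x) (g x) C) _; apply: leeD.
  by apply: ereal_sup_ubound; exists x.
by apply: pdist_le_hdist; exists x.
Qed.

End hausdorff_semidistance.

Lemma hdist_pullback_le {R : realType} {X : metricType R}
    (U : R -> R -> X -> X) (S : R -> X -> X) {A : R -> set X} (Ag : set X)
    {B : set X} {T t : R} :
  pullback_invariant U A -> (forall t, 0 <= t -> A t `<=` B) ->
  0 <= T -> 0 <= t ->
  (hdist (A (t + T)%R) Ag <=
   ereal_sup [set (mdist (U (t + T)%R t x) (S T x))%:E | x in B]
   + hdist (S T @` B) Ag)%E.
Proof.
move=> Ainv AB T_ge0 t_ge0; rewrite -(Ainv (t + T) t) ?lerDl //.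
apply: le_trans (hdist_image_le _ (S T) _ _) _; apply: leeD.
  by apply: ereal_sup_le => _ [x /(AB t t_ge0) Bx <-]; exists x.
by apply: le_hdist => _ [x /(AB t t_ge0) Bx <-]; exists x.
Qed.

Theorem theorem2p2 (R : realType) (X : metricType R)
  (U : R -> R -> X -> X) (S : R -> X -> X)
  (A : R -> set X) (Ag : set X) (B : set X) :
  @complete_space R X ->
  is_process U -> pullback_attractor U A ->
  is_semigroup S -> global_attractor S Ag ->
  mbounded B -> (forall t, 0 <= t -> A t `<=` B) ->
  (forall T : R, 0 < T ->
     ereal_sup [set (mdist (U (t + T) t x) (S T x))%:E | x in B]
       @[t --> +oo] --> 0%E) ->
  hdist (A t) Ag @[t --> +oo] --> 0%E.
Proof.
move=> _ _ [[A_neq0 [_ [Ainv _]]] _] _ [_ [_ [_ Ag_attr]]] B_bd AB US_close.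
have B_neq0 : B !=set0.
  by have [a A0a] := A_neq0 0; exists a; exact: AB A0a.
apply: near_le_cvge0; first by apply: nearW => t; exact: hdist_ge0.
move=> e e_gt0; have e2_gt0 : 0 < e / 2 by rewrite divr_gt0.
have /filter_ex [T [T_gt0 ST_close]] :
    \forall T \near +oo, 0 < T /\ (hdist (S T @` B) Ag <= (e / 2)%:E)%E.
  near=> T; split; near: T; first exact: nbhs_pinfty_gt.
  exact: cvge0_near_le (Ag_attr B B_neq0 B_bd).
apply: (near_pinfty_addr T); near=> t.
apply: le_trans (hdist_pullback_le U S Ag Ainv AB (ltW T_gt0) _) _.
  by near: t; exact: nbhs_pinfty_ge.
rewrite [e]splitr EFinD leeD //; near: t.
exact: cvge0_near_le (US_close T T_gt0).
Unshelve. all: end_near.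
Qed.
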